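(* Fix time series $s^1,\ldots,s^k$, $s^l\in\mathbb{Q}^{m_l}$, and let $N=\sum_{l=1}^k m_l-2(k-1)$. For each $l$ let $D_l$ be the directed graph with vertex set $V_l=[m_l]\times[N]$ and arc set $A_l$ consisting of all arcs $((i,j),(i+1,j+1))$, $((i,j),(i+1,j))$, $((i,j),(i,j+1))$ whose endpoints lie in $V_l$; let $s_l=(1,1)$ and $T_l=\{(m_l,j): j\in[N]\}$. Let $L_j\le U_j$ ($j\in[N]$) be the mean-value bounds and $M^l_v=\max(|s^l_i-L_j|,|U_j-s^l_i|)$ for $v=(i,j)\in V_l$. Let $\mathcal{V}$ (the NLP relaxation of the vertex-based formulation) be the set of real vectors $(x,y,z,d)$, $x=(x_j)_{j\in[N]}$, $y=(y^l_v)$, $d=(d^l_v)$ for $l\in[k]$, $v\in V_l$, $z=(z_j)_{j\in[N]}$, satisfying: $\sum_{j=1}^N x_j=1$, $0\le x_j\le 1$; $0\le y^l_v\le 1$; $y^l_{s_l}=1$; $y^l_u\le\sum_{(u,v)\in A_l}y^l_v$ for $u\in V_l\setminus T_l$; $y^l_u\le \sum_{(u,v)\in A_l}y^l_v+x_j$ for $u=(m_l,j)\in T_l$; $d^l_v\ge (z_j-s^l_i)^2-(M^l_v)^2(1-y^l_v)$ and $0\le d^l_v\le (M^l_v)^2$ for $v=(i,j)\in V_l$; $z_j\in[L_j,U_j]$. Let $\mathcal{A}$ (the NLP relaxation of the arc-based formulation) be the set of real vectors $(x,f,y,z,d)$ with $f=(f^l_a)_{l\in[k],a\in A_l}$ satisfying: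 $\sum_{j}x_j=1$, $0\le x_j\le1$; $0\le f^l_a\le 1$; for every $l$ and $v\in V_l$, $f^l(\delta^+(v))-f^l(\delta^-(v))$ equals $1$ if $v=s_l$, equals $-x_j$ if $v=(m_l,j)\in T_l$, and equals $0$ otherwise (where $f^l(\delta^{\pm}(v))$ is the sum of $f^l$ over arcs leaving/entering $v$); $y^l_v=f^l(\delta^+(v))+x_j$ if $v=(m_l,j)\in T_l$ and $y^l_v=f^l(\delta^+(v))$ otherwise; and the same constraints on $d$ and $z$ as in $\mathcal{V}$ (namely $d^l_v\ge (z_j-s^l_i)^2-(M^l_v)^2(1-y^l_v)$, $0\le d^l_v\le (M^l_v)^2$, $z_j\in[L_j,U_j]$). Then the projection of $\mathcal{A}$ onto the variables $(x,y,z,d)$ is contained in $\mathcal{V}$.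
   Context: $[m]=\{1,\ldots,m\}$. The bounds $L_j,U_j$ are, in the setting without global warping constraints, $U_j=\max\frac{\sum_{l}\sum_{i\in I_l}s^l_i}{\sum_l|I_l|}$ and $L_j=\min\frac{\sum_{l}\sum_{i\in I_l}s^l_i}{\sum_l|I_l|}$ over all choices of nonempty integer intervals $I_l=\{a_l,\ldots,b_l\}\subseteq[m_l]$, $l\in[k]$ (so they do not depend on $j$). The NLP relaxation of a mixed-integer program is obtained by replacing the binary requirements on the variables $x$, $y$, $f$ by the interval constraints $[0,1]$. *)

From HB Require Import structures.
From mathcomp Require Import all_boot all_order all_algebra.
Set Implicit Arguments. Unset Strict Implicit. Unset Printing Implicit Defensive.
Import Order.TTheory GRing.Theory Num.Theory.
Local Open Scope ring_scope.

(* Indices are 0-based: series l in 'I_k, position i in 'I_(m l), time j in 'I_N. *)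
Section DTW.
Variable R : realFieldType.
Variable k : nat.
Variable m : 'I_k -> nat.
Variable s : forall l : 'I_k, 'I_(m l) -> rat.

Definition Nlen : nat := ((\sum_(l < k) m l) - 2 * k.-1)%N.

(* choices of one interval {a_l,...,b_l} in [m_l] for every l *)
Definition Bm : nat := (\max_(l < k) m l)%N.
Definition choice_t := {ffun 'I_k -> 'I_Bm * 'I_Bm}.
Definition valid_choice (c : choice_t) : bool :=
  [forall l, (((c l).1 : nat) <= (c l).2)%N && (((c l).2 : nat) < m l)%N].
Definition interval_mean (c : choice_t) : R :=
  (\sum_(l < k) \sum_(i < m l | (((c l).1 : nat) <= i <= (c l).2)%N) ratr (s i))
  / ((\sum_(l < k) (((c l).2 : nat) - (c l).1).+1)%N)%:R.
Definition mean_default : R :=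
  if [pick c | valid_choice c] is Some c then interval_mean c else 0.
(* U_j and L_j (independent of j) *)
Definition Ubound : R := \big[Num.max/mean_default]_(c | valid_choice c) interval_mean c.
Definition Lbound : R := \big[Num.min/mean_default]_(c | valid_choice c) interval_mean c.

Definition vert (l : 'I_k) := ('I_(m l) * 'I_Nlen)%type.
Definition arcb (l : 'I_k) (u v : vert l) : bool :=
  [|| ((v.1 : nat) == u.1.+1) && ((v.2 : nat) == u.2.+1),
      ((v.1 : nat) == u.1.+1) && ((v.2 : nat) == u.2)
    | ((v.1 : nat) == u.1) && ((v.2 : nat) == u.2.+1)].
Definition arcs (l : 'I_k) := {a : vert l * vert l | arcb a.1 a.2}.
Definition is_src (l : 'I_k) (v : vert l) : bool := ((v.1 : nat) == 0%N) && ((v.2 : nat) == 0%N).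
Definition is_term (l : 'I_k) (v : vert l) : bool := ((v.1 : nat).+1 == m l).

Definition Mval (l : 'I_k) (v : vert l) : R :=
  Num.max `|ratr (s v.1) - Lbound| `|Ubound - ratr (s v.1)|.

Definition x_cons (x : 'I_Nlen -> R) : Prop :=
  \sum_(j < Nlen) x j = 1 /\ (forall j, 0 <= x j <= 1).
Definition dz_cons (y d : forall l, vert l -> R) (z : 'I_Nlen -> R) : Prop :=
  (forall l (v : vert l),
      (z v.2 - ratr (s v.1)) ^+ 2 - (Mval v) ^+ 2 * (1 - y l v) <= d l v
      /\ 0 <= d l v <= (Mval v) ^+ 2)
  /\ (forall j, Lbound <= z j <= Ubound).

Definition inV (x : 'I_Nlen -> R) (y : forall l, vert l -> R) (z : 'I_Nlen -> R)
    (d : forall l, vert l -> R) : Prop :=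
  x_cons x
  /\ (forall l v, 0 <= y l v <= 1)
  /\ (forall l (v : vert l), is_src v -> y l v = 1)
  /\ (forall l (u : vert l), ~~ is_term u -> y l u <= \sum_(v | arcb u v) y l v)
  /\ (forall l (u : vert l), is_term u -> y l u <= \sum_(v | arcb u v) y l v + x u.2)
  /\ dz_cons y d z.

Definition outflow (f : forall l, arcs l -> R) l (v : vert l) : R :=
  \sum_(a : arcs l | (sval a).1 == v) f l a.
Definition inflow (f : forall l, arcs l -> R) l (v : vert l) : R :=
  \sum_(a : arcs l | (sval a).2 == v) f l a.

Definition inA (x : 'I_Nlen -> R) (f : forall l, arcs l -> R) (y : forall l, vert l -> R)
    (z : 'I_Nlen -> R) (d : forall l, vert l -> R) : Prop :=
  x_cons x
  /\ (forall l a, 0 <= f l a <= 1)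
  /\ (forall l (v : vert l), outflow f v - inflow f v =
        (if is_src v then 1 else if is_term v then - x v.2 else 0))
  /\ (forall l (v : vert l), y l v = outflow f v + (if is_term v then x v.2 else 0))
  /\ dz_cons y d z.

End DTW.

From HB Require Import structures.
From mathcomp Require Import all_boot all_order all_algebra.
From mathcomp Require Import zify lra.
Set Implicit Arguments. Unset Strict Implicit. Unset Printing Implicit Defensive.
Import Order.TTheory GRing.Theory Num.Theory.
Local Open Scope ring_scope.

(* Every arc of D_l increases i + j, so the flow f^l is acyclic.  For such a
   flow the net outflow of the up-set {u | rank v <= rank u} is at most minus
   the inflow of v; as the only positive excesses are the unit supply at s_l
   and the terminal terms x_j, this bounds y^l_v = f^l(delta^+(v)) + [v in T_l] x_j
   by sum_j x_j = 1.  The remaining constraints of the vertex formulation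
   follow because every arc leaving u enters one of its successors w, and
   y^l_w dominates the inflow of w. *)

Section AcyclicFlow.

Variables (R : realFieldType) (V A : finType) (tail head : A -> V).
Variable f : A -> R.
Hypothesis f_ge0 : forall a, 0 <= f a.

Let outf (v : V) := \sum_(a | tail a == v) f a.
Let inf (v : V) := \sum_(a | head a == v) f a.

Lemma sum_flow_by_endpoint (e : A -> V) (P : pred V) :
  \sum_(u | P u) \sum_(a | e a == u) f a = \sum_(a | P (e a)) f a.
Proof.
rewrite (partition_big e P) //; apply: eq_bigr => u Pu.
by apply: eq_bigl => a; case: eqP => [->|]; rewrite ?Pu ?andbF.
Qed.

Lemma outflow_le_sum_inflow (E : rel V) :
  (forall a, E (tail a) (head a)) -> forall u, outf u <= \sum_(w | E u w) inf w.
Proof.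
move=> arcE u; rewrite /outf (partition_big head (E u)); last first.
  by move=> a /eqP <-.
apply: ler_sum => w _; rewrite [leRHS]big_mkcond [leLHS]big_mkcond /=.
by apply: ler_sum => a _; case: eqP; rewrite ?andbT ?andbF // => _; case: ifP.
Qed.

Variable rank : V -> nat.
Hypothesis rank_arc : forall a, (rank (tail a) < rank (head a))%N.

(* No arc leaves the up-set of v, and every arc entering v enters it from outside. *)
Lemma inflow_le_upper_cut v :
  inf v + \sum_(u | (rank v <= rank u)%N) (outf u - inf u) <= 0.
Proof.
pose C u := (rank v <= rank u)%N.
have C_head a : C (tail a) -> C (head a).
  by have := rank_arc a; rewrite /C; lia.
rewrite sumrB !sum_flow_by_endpoint.
rewrite [X in _ + (_ - X)](bigID (fun a => C (tail a))) /=.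
have -> : \sum_(a | C (head a) && C (tail a)) f a = \sum_(a | C (tail a)) f a.
  by apply: eq_bigl => a; case: (boolP (C (tail a))) => [/C_head ->|]; rewrite ?andbF.
suff : inf v <= \sum_(a | C (head a) && ~~ C (tail a)) f a by lra.
rewrite /inf [leLHS]big_mkcond [leRHS]big_mkcond /=.
apply: ler_sum => a _; case: eqP => [hv|_]; last by case: ifP.
have := rank_arc a; rewrite /C hv leqnn /= -ltnNge => ->.
exact: lexx.
Qed.

Lemma outflow_add_le_sum (g : V -> R) :
  (forall u, 0 <= g u) -> (forall u, 0 <= outf u - inf u + g u) ->
  forall v, outf v + g v <= \sum_u g u.
Proof.
move=> g_ge0 excess_ge0 v; pose C u := (rank v <= rank u)%N.
pose e u := outf u - inf u + g u.
have e_le : e v <= \sum_(u | C u) e u.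
  by rewrite (bigD1 v) /C ?leqnn //= lerDl; apply: sumr_ge0 => u _; apply: excess_ge0.
have g_le : \sum_(u | C u) g u <= \sum_u g u.
  by rewrite [leRHS](bigID C) /= lerDl; apply: sumr_ge0 => u _; apply: g_ge0.
have sum_e : \sum_(u | C u) e u = \sum_(u | C u) (outf u - inf u) + \sum_(u | C u) g u.
  by rewrite -big_split.
have := inflow_le_upper_cut v; rewrite -/C.
rewrite /e in e_le sum_e; lra.
Qed.

End AcyclicFlow.

Lemma sum_ord_last_indicator (R : numDomainType) n :
  \sum_(i < n) ((i.+1 == n)%:R : R) = (0 < n)%:R.
Proof.
case: n => [|n]; first by rewrite big_ord0.
rewrite big_ord_recr /= eqxx big1 ?add0r // => i _.
by rewrite eqSS ltn_eqF.
Qed.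

Definition arc_tail k (m : 'I_k -> nat) l (a : arcs m l) : vert m l := (sval a).1.
Definition arc_head k (m : 'I_k -> nat) l (a : arcs m l) : vert m l := (sval a).2.
Definition vert_rank k (m : 'I_k -> nat) l (v : vert m l) : nat := (v.1 + v.2)%N.

Lemma vert_rank_arc k (m : 'I_k -> nat) l (a : arcs m l) :
  (vert_rank (arc_tail a) < vert_rank (arc_head a))%N.
Proof.
rewrite /vert_rank /arc_tail /arc_head.
by case: a => -[u w] /= /or3P [] /andP [/eqP -> /eqP ->]; lia.
Qed.

Section ArcRelaxation.

Variables (R : realFieldType) (k : nat) (m : 'I_k -> nat).
Variables (x : 'I_(Nlen m) -> R) (f : forall l, arcs m l -> R).
Variable y : forall l, vert m l -> R.
Hypotheses (x_ge0 : forall j, 0 <= x j) (sum_x : \sum_j x j = 1).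
Hypothesis f_ge0 : forall l (a : arcs m l), 0 <= f a.
Hypothesis flow_conservation : forall l (v : vert m l),
  outflow f v - inflow f v = if is_src v then 1 else if is_term v then - x v.2 else 0.

Definition terminal_supply l (v : vert m l) : R := if is_term v then x v.2 else 0.

Hypothesis y_def : forall l (v : vert m l), y v = outflow f v + terminal_supply v.

Lemma terminal_supply_ge0 l (v : vert m l) : 0 <= terminal_supply v.
Proof. by rewrite /terminal_supply; case: ifP. Qed.

Lemma sum_terminal_supply_le1 l : \sum_(v : vert m l) terminal_supply v <= 1.
Proof.
rewrite -(pair_big xpredT xpredT (fun i j => terminal_supply (i, j))) /=.
rewrite (eq_bigr (fun i : 'I_(m l) => ((i.+1 == m l)%:R : R))) => [|i _].
  by rewrite sum_ord_last_indicator lern1 leq_b1.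
rewrite /terminal_supply /is_term /=.
by case: eqP => _; [rewrite sum_x | rewrite big1].
Qed.

Lemma terminal_excess_ge0 l (v : vert m l) :
  0 <= outflow f v - inflow f v + terminal_supply v.
Proof.
rewrite flow_conservation /terminal_supply.
by case: is_src; case: is_term; rewrite ?addNr ?addr0 ?addr_ge0.
Qed.

Lemma y_ge0 l (v : vert m l) : 0 <= y v.
Proof. by rewrite y_def addr_ge0 ?terminal_supply_ge0 ?sumr_ge0. Qed.

Lemma y_le1 l (v : vert m l) : y v <= 1.
Proof.
rewrite y_def; apply: le_trans (sum_terminal_supply_le1 l).
exact: (outflow_add_le_sum (f_ge0 (l := l)) (@vert_rank_arc k m l)
          (@terminal_supply_ge0 l) (@terminal_excess_ge0 l)).
Qed.

Lemma inflow_le_y l (v : vert m l) : inflow f v <= y v.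
Proof. by have := terminal_excess_ge0 v; rewrite y_def; lra. Qed.

Lemma y_src l (v : vert m l) : is_src v -> y v = 1.
Proof.
move=> src_v; apply/le_anti; rewrite y_le1 /=.
have := flow_conservation v; rewrite src_v y_def => cons_v.
have := terminal_supply_ge0 v; have : 0 <= inflow f v by apply: sumr_ge0.
lra.
Qed.

Lemma outflow_le_sum_succ l (u : vert m l) :
  outflow f u <= \sum_(w | arcb u w) y w.
Proof.
have arc_succ (a : arcs m l) : arcb (arc_tail a) (arc_head a) by apply: (svalP a).
apply: le_trans (outflow_le_sum_inflow (f_ge0 (l := l)) arc_succ u) _.
by apply: ler_sum => w _; apply: inflow_le_y.
Qed.

End ArcRelaxation.

Theorem mainTheorem2 (R : realFieldType) (k : nat) (m : 'I_k -> nat)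
  (s : forall l : 'I_k, 'I_(m l) -> rat)
  (x : 'I_(Nlen m) -> R) (y : forall l : 'I_k, vert m l -> R)
  (z : 'I_(Nlen m) -> R) (d : forall l : 'I_k, vert m l -> R) :
  (exists f : forall l : 'I_k, arcs m l -> R, inA s x f y z d) ->
  inV s x y z d.
Proof.
case=> f [[sum_x x_bounds] [f_bounds [cons [y_def dz]]]].
have x_ge0 j : 0 <= x j by case/andP: (x_bounds j).
have f_ge0 l (a : arcs m l) : 0 <= f l a by case/andP: (f_bounds l a).
have outflow_le := outflow_le_sum_succ x_ge0 f_ge0 cons y_def.
split; first by [].
split.
  by move=> l v; rewrite (y_ge0 x_ge0 f_ge0 y_def) (y_le1 x_ge0 sum_x f_ge0 cons y_def).
split; first exact: y_src x_ge0 sum_x f_ge0 cons y_def.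
split; first by move=> l u /negbTE non_term; rewrite y_def non_term addr0; apply: outflow_le.
split; last by [].
by move=> l u term; rewrite y_def term lerD2r; apply: outflow_le.
Qed.
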